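(* Let $\mathcal{L}:\mathbb{R}^d\to\mathbb{R}$ be differentiable with $\nabla\mathcal{L}$ Lipschitz continuous with constant $L$. Run full-batch MoFO with $\beta_1<\sqrt{\beta_2}<1$, $\epsilon=0$ and learning rates $\eta_t=\eta/\sqrt t$ ($\eta>0$). Then for every iteration $t\ge1$, $$\left\|\frac{m_t}{1-\beta_1^t}-g_t\right\|_1\le\frac{2\sqrt2\,\beta_1\sqrt d\,LC\eta}{(1-\beta_1)^2\sqrt t},$$ where $C=\dfrac{\sqrt{d\cdot(\alpha\%)+B}}{\sqrt{1-\beta_2}\,(1-\beta_1/\sqrt{\beta_2})}$.
   Context: The coordinates of $\mathbb{R}^d$ are partitioned into $B$ blocks of sizes $d_1,\dots,d_B$ with $\sum_kd_k=d$. Fix $\alpha\%\in(0,1]$. For $z\in\mathbb{R}^d$, $\texttt{FLT}_\alpha(z)\in\{0,1\}^d$ equals, in each block $k$, $1$ exactly on a set of $\lceil d_k\cdot\alpha\%\rceil$ indices with the largest absolute values of $z$ within that block (ties broken in favour of smaller indices), and $0$ elsewhere. Full-batch MoFO with $\beta_1,\beta_2\in(0,1)$, learning rates $\eta_t>0$, initial point $\theta_0$: $m_0=v_0=0$; for $t\ge1$, $g_t=\nabla\mathcal{L}(\theta_{t-1})$, $m_t=\beta_1m_{t-1}+(1-\beta_1)g_t$, $v_t=\beta_2v_{t-1}+(1-\beta_2)g_t\odot g_t$, $\hat m_t=m_t/(1-\beta_1^t)$, $\hat v_t=v_t/(1-\beta_2^t)$, $\theta_t=\theta_{t-1}-\eta_t(\hat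 m_t\odot\texttt{FLT}_\alpha(m_t))/\sqrt{\hat v_t}$ entrywise ($\epsilon=0$: no additive constant in the denominator; a quotient with $\hat v_{i,t}=0$ is taken as $0$). *)

From HB Require Import structures.
From mathcomp Require Import all_boot all_order all_algebra.
From mathcomp Require Import all_classical all_reals all_analysis.
Set Implicit Arguments. Unset Strict Implicit. Unset Printing Implicit Defensive.
Import Order.TTheory GRing.Theory Num.Theory.
Import numFieldNormedType.Exports.
Local Open Scope ring_scope.

Section MoFO.
Variables (R : realType) (d B : nat).

Definition norm2 (x : 'rV[R]_d) : R := Num.sqrt (\sum_(i < d) (x 0 i) ^+ 2).
Definition norm1 (x : 'rV[R]_d) : R := \sum_(i < d) `|x 0 i|.

Definition blk_size (blk : 'I_d -> 'I_B) (k : 'I_B) : nat := #|[pred i | blk i == k]|.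

Definition blk_rank (blk : 'I_d -> 'I_B) (z : 'rV[R]_d) (i : 'I_d) : nat :=
  #|[pred j : 'I_d | (blk j == blk i) &&
       ((`|z 0 i| < `|z 0 j|) || ((`|z 0 j| == `|z 0 i|) && (j < i)%N))]|.

(* FLT_alpha(z)_i = 1 iff i is among the ceil(d_k * alpha) indices of its block
   k with the largest |z| (ties to smaller indices). *)
Definition FLT (blk : 'I_d -> 'I_B) (alpha : R) (z : 'rV[R]_d) (i : 'I_d) : bool :=
  ((blk_rank blk z i)%:Z < Num.ceil ((blk_size blk (blk i))%:R * alpha))%R.

(* Full-batch MoFO: mofo t = (theta_t, m_t, v_t), with epsilon = 0 and
   learning rates lr t (t >= 1); G is the gradient map. *)
Fixpoint mofo (G : 'rV[R]_d -> 'rV[R]_d) (blk : 'I_d -> 'I_B) (alpha b1 b2 : R)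
    (lr : nat -> R) (theta0 : 'rV[R]_d) (t : nat)
    : 'rV[R]_d * 'rV[R]_d * 'rV[R]_d :=
  match t with
  | 0%N => (theta0, 0, 0)
  | t'.+1 =>
      let '(th, m, v) := mofo G blk alpha b1 b2 lr theta0 t' in
      let g := G th in
      let m' := b1 *: m + (1 - b1) *: g in
      let v' := b2 *: v + (1 - b2) *: \row_i (g 0 i ^+ 2) in
      let mh := (1 - b1 ^+ t)^-1 *: m' in
      let vh := (1 - b2 ^+ t)^-1 *: v' in
      let th' := th - lr t *: \row_i
          (if vh 0 i == 0 then 0
           else (if FLT blk alpha m' i then mh 0 i else 0) / Num.sqrt (vh 0 i)) in
      (th', m', v')
  end.

Definition mofo_theta G blk alpha b1 b2 lr theta0 t :=
  (mofo G blk alpha b1 b2 lr theta0 t).1.1.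
Definition mofo_m G blk alpha b1 b2 lr theta0 t :=
  (mofo G blk alpha b1 b2 lr theta0 t).1.2.

End MoFO.

(* Let D_t := m_t - (1 - b1^t) g_t, where g_t = G theta_(t-1).  The momentum
   recursion gives D_(t+1) = b1 (D_t + (1 - b1^t) (g_t - g_(t+1))), and
   |g_t - g_(t+1)|_2 <= L |theta_t - theta_(t-1)|_2 <= L eta_t C.  The last
   bound holds because coordinatewise m_t^2 <= K v_t with
   K = (1 - b1)^2 / ((1 - b2) (1 - b1^2 / b2)), so every coordinate kept by the
   filter has mhat^2 / vhat <= 1 / ((1 - b2) (1 - b1 / sqrt b2)^2), and the
   filter keeps at most ceil(d_k alpha) <= d_k alpha + 1 coordinates of block k.
   Unrolling, |D_t|_2 <= L C eta (1 - b1^t) sum_(j < t) b1^(t-j) / sqrt j, and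
   sqrt (t / j) <= (t - j + 2) / 2 bounds this sum by
   2 sqrt 2 b1 / ((1 - b1)^2 sqrt t).  Finally |x|_1 <= sqrt d |x|_2. *)

From HB Require Import structures.
From mathcomp Require Import all_boot all_order all_algebra.
From mathcomp Require Import all_classical all_reals all_analysis.
From mathcomp Require Import ring lra.
Set Implicit Arguments. Unset Strict Implicit. Unset Printing Implicit Defensive.
Import Order.TTheory GRing.Theory Num.Theory.
Import numFieldNormedType.Exports.
Local Open Scope ring_scope.

Section CauchySchwarz.
Variable R : rcfType.

Lemma sumr_sqr_ge0 n (a : 'I_n -> R) : 0 <= \sum_i a i ^+ 2.
Proof. by apply: sumr_ge0 => i _; exact: sqr_ge0. Qed.

(* Lagrange's identity: the defect of Cauchy-Schwarz is half of
   [\sum_(i, j) (a i * b j - a j * b i) ^+ 2]. *)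
Lemma CauchySchwarz_sum n (a b : 'I_n -> R) :
  (\sum_i a i * b i) ^+ 2 <= (\sum_i a i ^+ 2) * (\sum_i b i ^+ 2).
Proof.
have sum_prod (f g : 'I_n -> R) :
    \sum_i \sum_j f i * g j = (\sum_i f i) * (\sum_i g i).
  by rewrite mulr_suml; apply: eq_bigr => i _; rewrite mulr_sumr.
have lagrange : \sum_i \sum_j (a i * b j - a j * b i) ^+ 2 =
    2 * ((\sum_i a i ^+ 2) * (\sum_i b i ^+ 2) - (\sum_i a i * b i) ^+ 2).
  have expand i j : (a i * b j - a j * b i) ^+ 2 = a i ^+ 2 * b j ^+ 2
      + a j ^+ 2 * b i ^+ 2 - 2 * (a i * b i) * (a j * b j).
    by ring.
  under eq_bigr => i _ do under eq_bigr => j _ do rewrite expand.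
  under eq_bigr => i _ do rewrite big_split /= sumrN big_split /=.
  rewrite big_split /= sumrN big_split /= !sum_prod.
  rewrite [X in _ + X - _]exchange_big /= sum_prod -mulr_sumr.
  ring.
have : 0 <= \sum_i \sum_j (a i * b j - a j * b i) ^+ 2.
  by apply: sumr_ge0 => i _; apply: sumr_ge0 => j _; exact: sqr_ge0.
by rewrite lagrange pmulr_rge0 // subr_ge0.
Qed.

Lemma CauchySchwarz_sum_sqrt n (a b : 'I_n -> R) :
  \sum_i a i * b i <= Num.sqrt (\sum_i a i ^+ 2) * Num.sqrt (\sum_i b i ^+ 2).
Proof.
rewrite -sqrtrM ?sumr_sqr_ge0 //; apply: le_trans (ler_norm _) _.
by rewrite -sqrtr_sqr ler_wsqrtr // CauchySchwarz_sum.
Qed.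

End CauchySchwarz.

Section Norms.
Variables (R : realType) (n : nat).
Implicit Types (x y : 'rV[R]_n) (c : R).

Lemma norm2_ge0 x : 0 <= norm2 x.
Proof. exact: sqrtr_ge0. Qed.

Lemma norm2_0 : norm2 (0 : 'rV[R]_n) = 0.
Proof. by rewrite /norm2 big1 ?sqrtr0 // => i _; rewrite mxE expr0n. Qed.

Lemma norm2D x y : norm2 (x + y) <= norm2 x + norm2 y.
Proof.
rewrite /norm2 -[leRHS]ger0_norm ?addr_ge0 ?sqrtr_ge0 // -sqrtr_sqr ler_wsqrtr //.
have -> : \sum_i (x + y) 0 i ^+ 2 =
    \sum_i x 0 i ^+ 2 + \sum_i y 0 i ^+ 2 + 2 * \sum_i x 0 i * y 0 i.
  by rewrite mulr_sumr -!big_split /=; apply: eq_bigr => i _; rewrite !mxE; ring.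
have := CauchySchwarz_sum_sqrt (fun i => x 0 i) (fun i => y 0 i).
rewrite sqrrD !sqr_sqrtr ?sumr_sqr_ge0 // -mulr_natl /=; lra.
Qed.

Lemma norm2Z c x : norm2 (c *: x) = `|c| * norm2 x.
Proof.
rewrite /norm2 -sqrtr_sqr -sqrtrM ?sqr_ge0 // mulr_sumr.
by congr Num.sqrt; apply: eq_bigr => i _; rewrite !mxE exprMn.
Qed.

Lemma norm2_distC x y : norm2 (x - y) = norm2 (y - x).
Proof. by rewrite -opprB -scaleN1r norm2Z normrN1 mul1r. Qed.

Lemma norm2_const_mx1 : norm2 (const_mx 1 : 'rV[R]_n) = Num.sqrt n%:R.
Proof.
rewrite /norm2; under eq_bigr => i _ do rewrite mxE expr1n.
by rewrite sumr_const card_ord.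
Qed.

Lemma norm1Z c x : norm1 (c *: x) = `|c| * norm1 x.
Proof. by rewrite /norm1 mulr_sumr; apply: eq_bigr => i _; rewrite mxE normrM. Qed.

Lemma norm1_le_norm2 x : norm1 x <= Num.sqrt n%:R * norm2 x.
Proof.
have := CauchySchwarz_sum_sqrt (fun i => `|x 0 i|) (fun _ => 1).
have -> : \sum_i `|x 0 i| ^+ 2 = \sum_i x 0 i ^+ 2.
  by apply: eq_bigr => i _; rewrite real_normK ?num_real.
under eq_bigr => i _ do rewrite mulr1.
by rewrite sumr_const expr1n card_ord mulrC.
Qed.

Lemma lipschitz_ge0 (f : 'rV[R]_n -> 'rV[R]_n) (L : R) : (0 < n)%N ->
  (forall x y, norm2 (f x - f y) <= L * norm2 (x - y)) -> 0 <= L.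
Proof.
move=> n_gt0 /(_ (const_mx 1) 0); rewrite subr0 norm2_const_mx1.
have sn : 0 < Num.sqrt n%:R :> R by rewrite sqrtr_gt0 ltr0n.
by rewrite -(pmulr_lge0 _ sn); apply: le_trans; exact: norm2_ge0.
Qed.

End Norms.

Section DiscountedSums.
Variable R : rcfType.
Implicit Types (x c : R) (f : nat -> R).

Definition disc_sum x f t : R := \sum_(j < t) x ^+ (t - j) * f j.

Lemma disc_sumS x f t : disc_sum x f t.+1 = x * (disc_sum x f t + f t).
Proof.
rewrite /disc_sum big_ord_recr /= subSnn expr1 mulrDr mulr_sumr; congr (_ + _).
by apply: eq_bigr => j _; rewrite subSn 1?ltnW // exprS mulrA.
Qed.

Lemma disc_sum_ge0 x f t : 0 <= x -> (forall j, 0 <= f j) -> 0 <= disc_sum x f t.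
Proof. by move=> x0 f0; apply: sumr_ge0 => j _; rewrite mulr_ge0 ?exprn_ge0. Qed.

Lemma disc_sumZ x c f t : disc_sum x (fun j => c * f j) t = c * disc_sum x f t.
Proof. by rewrite /disc_sum mulr_sumr; apply: eq_bigr => j _; rewrite mulrCA. Qed.

Definition disc_lag_sum x t : R := \sum_(j < t) x ^+ (t - j) * ((t - j)%:R + 2).

Lemma disc_lag_sum_closed x t : (1 - x) ^+ 2 * disc_lag_sum x t =
  3 * x - 2 * x ^+ 2 - x ^+ t.+1 * (1 + (t%:R + 2) * (1 - x)).
Proof.
elim: t => [|t IH]; first by rewrite /disc_lag_sum big_ord0; ring.
have -> : disc_lag_sum x t.+1 = disc_lag_sum x t + x ^+ t.+1 * (t%:R + 3).
  rewrite /disc_lag_sum big_ord_recl /= subn0 addrC; congr (_ + _).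
  by rewrite -addn1 natrD; congr (_ * _); ring.
by rewrite mulrDr IH -addn1 natrD !exprS; ring.
Qed.

Lemma disc_lag_sum_le x t : 0 <= x -> x < 1 ->
  disc_lag_sum x t <= 3 * x / (1 - x) ^+ 2.
Proof.
move=> x0 x1; have x1' : 0 < (1 - x) ^+ 2 by apply/exprn_gt0; rewrite subr_gt0.
rewrite ler_pdivlMr // mulrC disc_lag_sum_closed.
have : 0 <= x ^+ t.+1 * (1 + (t%:R + 2) * (1 - x)).
  by rewrite mulr_ge0 ?exprn_ge0 // addr_ge0 // mulr_ge0 // subr_ge0 ltW.
have := sqr_ge0 x; lra.
Qed.

(* Since [j + k <= j * (k + 1) <= j * ((k + 2) / 2) ^+ 2] for [j >= 1]. *)
Lemma sqrt_natD_le j k : (0 < j)%N ->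
  Num.sqrt (j + k)%:R <= Num.sqrt j%:R * ((k%:R + 2) / 2) :> R.
Proof.
move=> j0; have k0 : 0 <= k%:R :> R by [].
have j1 : 1 <= j%:R :> R by rewrite ler1n.
rewrite -[X in _ * X]ger0_norm ?divr_ge0 ?addr_ge0 // -sqrtr_sqr -sqrtrM //.
by rewrite ler_wsqrtr // natrD; nra.
Qed.

(* The [j = 0] term vanishes because [(Num.sqrt 0)^-1 = 0]. *)
Lemma disc_sum_invsqrt_le x t : 0 < x -> x < 1 -> (0 < t)%N ->
  disc_sum x (fun j => (Num.sqrt j%:R)^-1) t
    <= 2 * Num.sqrt 2 * x / ((1 - x) ^+ 2 * Num.sqrt t%:R).
Proof.
move=> x0 x1 t0; have x1' : 0 < (1 - x) ^+ 2 by apply/exprn_gt0; rewrite subr_gt0.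
have st : 0 < Num.sqrt t%:R :> R by rewrite sqrtr_gt0 ltr0n.
have weighted : Num.sqrt t%:R * disc_sum x (fun j => (Num.sqrt j%:R)^-1) t
    <= disc_lag_sum x t / 2.
  rewrite /disc_sum /disc_lag_sum mulr_sumr mulr_suml; apply: ler_sum => j _.
  have tj : (t - j)%:R + 2 >= 0 :> R by rewrite addr_ge0.
  have [->|j0] := posnP j.
    by rewrite sqrtr0 invr0 !mulr0 !mulr_ge0 ?exprn_ge0 // ltW.
  rewrite mulrCA -mulrA; apply: ler_wpM2l; first exact/exprn_ge0/ltW.
  rewrite ler_pdivrMr ?sqrtr_gt0 ?ltr0n // mulrC.
  by rewrite -{1}(subnKC (ltnW (ltn_ord j))) sqrt_natD_le.
have s2 : 1 <= Num.sqrt 2 :> R by rewrite -{1}sqrtr1 ler_sqrt // ler1n.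
have := disc_lag_sum_le t (ltW x0) x1.
rewrite ler_pdivlMr // => geom.
rewrite ler_pdivlMr; last exact: mulr_gt0.
move: weighted geom x1'; set S := disc_sum _ _ _; set H := disc_lag_sum _ _.
set c := (1 - x) ^+ 2; move=> weighted geom c0; nra.
Qed.
End DiscountedSums.

Section FilterCount.
Variables (R : realType) (d B : nat) (blk : 'I_d -> 'I_B).

Lemma sum_blk_size : \sum_(k < B) blk_size blk k = d.
Proof.
rewrite -[RHS](card_ord d) -sum1_card (partition_big blk predT) //=.
by apply: eq_bigr => k _; rewrite sum1dep_card; apply: eq_card => i; rewrite !inE.
Qed.

Variable z : 'rV[R]_d.

Definition precedes (j i : 'I_d) : bool :=
  (`|z 0 i| < `|z 0 j|) || ((`|z 0 j| == `|z 0 i|) && (j < i)%N).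

Lemma precedes_irr i : precedes i i = false.
Proof. by rewrite /precedes ltxx ltnn andbF. Qed.

Lemma precedes_trans i j k : precedes k j -> precedes j i -> precedes k i.
Proof.
rewrite /precedes => /orP[kj|/andP[/eqP kj kj']] /orP[ji|/andP[/eqP ji ji']].
- by rewrite (lt_trans ji kj).
- by rewrite -ji kj.
- by rewrite kj ji.
- by rewrite kj ji eqxx (ltn_trans kj' ji') orbT.
Qed.

Lemma precedes_total i j : i != j -> precedes i j || precedes j i.
Proof.
move=> ij; rewrite /precedes.
case: (ltgtP `|z 0 i| `|z 0 j|) => //= _; rewrite ?orbT //.
by case: ltngtP => // /val_inj eq_ij; rewrite eq_ij eqxx in ij.
Qed.

Lemma blk_rank_lt i j : blk j = blk i -> precedes j i ->
  (blk_rank blk z j < blk_rank blk z i)%N.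
Proof.
move=> bji ji; apply: proper_card; rewrite properE; apply/andP; split.
  apply/fintype.subsetP => k; rewrite !inE => /andP[/eqP -> kj].
  by rewrite bji eqxx; exact: precedes_trans kj ji.
apply/fintype.subsetPn; exists j; rewrite !inE bji eqxx //=.
by have := precedes_irr j; rewrite /precedes => ->.
Qed.

Lemma blk_rank_inj i j : blk i = blk j ->
  blk_rank blk z i = blk_rank blk z j -> i = j.
Proof.
move=> bij rij; apply/eqP; apply: contraTT isT => ij.
case/orP: (precedes_total ij) => [/(blk_rank_lt bij)|/(blk_rank_lt (esym bij))];
  by rewrite rij ltnn.
Qed.

Lemma card_blk_rank_lt n k :
  (#|[pred i | (blk i == k) && (blk_rank blk z i < n)%N]| <= n)%N.
Proof.
rewrite cardE -(size_map (blk_rank blk z)) -[leqRHS](size_iota 0 n).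
apply: uniq_leq_size => [|r /mapP[i]]; last first.
  by rewrite mem_enum inE => /andP[_ ri] ->; rewrite mem_iota.
rewrite map_inj_in_uniq ?enum_uniq // => i j.
rewrite !mem_enum !inE => /andP[/eqP bi _] /andP[/eqP bj _].
by apply: blk_rank_inj; rewrite bi bj.
Qed.

Lemma card_FLT_blk alpha k : 0 <= alpha ->
  #|[set i | (blk i == k) && FLT blk alpha z i]|%:R
    <= (blk_size blk k)%:R * alpha + 1 :> R.
Proof.
move=> alpha0; set x := _ * alpha.
have [n ceil_x] : exists n : nat, Num.ceil x = n%:Z.
  exists `|Num.ceil x|%N.
  by rewrite gez0_abs // ceil_ge0 (lt_le_trans (ltrN10 _)) ?mulr_ge0.
have : (#|[set i | (blk i == k) && FLT blk alpha z i]| <= n)%N.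
  apply: leq_trans (card_blk_rank_lt n k); apply: subset_leq_card.
  apply/fintype.subsetP => i; rewrite !inE => /andP[/eqP bik].
  by rewrite bik eqxx /FLT bik -/x ceil_x ltz_nat.
rewrite -(ler_nat R) => /le_trans; apply.
by have := ceilB1_lt x; rewrite intrB ceil_x -pmulrn ltrBlDr => /ltW.
Qed.

Lemma sum_FLT alpha : 0 <= alpha ->
  \sum_i (FLT blk alpha z i)%:R <= d%:R * alpha + B%:R :> R.
Proof.
move=> alpha0; rewrite (partition_big blk predT) //=.
have count_blk k : \sum_(i | true && (blk i == k)) (FLT blk alpha z i)%:R
    = #|[set i | (blk i == k) && FLT blk alpha z i]|%:R :> R.
  rewrite -sum1dep_card natr_sum big_mkcond [RHS]big_mkcond /=.
  by apply: eq_bigr => i _; case: (blk i == k); case: FLT.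
under eq_bigr => k _ do rewrite count_blk.
apply: le_trans (ler_sum _ (fun k _ => card_FLT_blk k alpha0)) _.
by rewrite big_split /= sumr_const card_ord -mulr_suml -natr_sum sum_blk_size.
Qed.

End FilterCount.

Lemma sqrD_le_split (R : realFieldType) (a b l : R) : 0 < l < 1 ->
  (a + b) ^+ 2 <= a ^+ 2 / l + b ^+ 2 / (1 - l).
Proof.
case/andP=> l0 l1; have l1' : 0 < 1 - l by rewrite subr_gt0.
have -> : a ^+ 2 / l + b ^+ 2 / (1 - l) =
    (a + b) ^+ 2 + (a * (1 - l) - b * l) ^+ 2 / (l * (1 - l)).
  by field; rewrite !lt0r_neq0.
by rewrite lerDl divr_ge0 ?sqr_ge0 ?mulr_ge0 ?ltW.
Qed.

Lemma debiased_ratio_le (R : realFieldType) (m v K x y : R) t :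
  0 < x < 1 -> 0 < y < 1 -> 0 < v -> m ^+ 2 <= K * v ->
  ((1 - x ^+ t.+1)^-1 * m) ^+ 2 / ((1 - y ^+ t.+1)^-1 * v) <= K / (1 - x) ^+ 2.
Proof.
case/andP=> x0 x1 /andP[y0 y1] v0 mK.
set a := 1 - x ^+ t.+1; set b := 1 - y ^+ t.+1.
have b0 : 0 < b by rewrite subr_gt0 exprn_ilt1 ?ltW.
have b1 : b <= 1 by rewrite lerBlDr lerDl exprn_ge0 ?ltW.
have x1' : 0 < 1 - x by rewrite subr_gt0.
have xa : 1 - x <= a by rewrite lerD2l lerN2 exprS ler_piMr ?exprn_ile1 ?ltW.
have a0 : 0 < a := lt_le_trans x1' xa.
have -> : (a^-1 * m) ^+ 2 / (b^-1 * v) = m ^+ 2 / v * (b / a ^+ 2).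
  by field; rewrite !lt0r_neq0.
have mvK : m ^+ 2 / v <= K by rewrite ler_pdivrMr.
have a2 : 0 < a ^+ 2 := exprn_gt0 2 a0.
have x2 : 0 < (1 - x) ^+ 2 := exprn_gt0 2 x1'.
have ba : b / a ^+ 2 <= ((1 - x) ^+ 2)^-1.
  apply: le_trans (ler_piMl _ b1) _; first by rewrite invr_ge0 exprn_ge0 ?ltW.
  by rewrite lef_pV2 ?posrE // ler_pXn2r ?nnegrE ?(ltW x1') ?(ltW a0).
apply: ler_pM => //; first exact: divr_ge0 (sqr_ge0 m) (ltW v0).
exact: divr_ge0 (ltW b0) (ltW a2).
Qed.

Section Dynamics.
Variables (R : realType) (d B : nat) (G : 'rV[R]_d -> 'rV[R]_d)
  (blk : 'I_d -> 'I_B) (alpha b1 b2 : R) (lr : nat -> R) (theta0 : 'rV[R]_d).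

Local Notation state := (mofo G blk alpha b1 b2 lr theta0).
Local Notation theta := (mofo_theta G blk alpha b1 b2 lr theta0).
Local Notation mom := (mofo_m G blk alpha b1 b2 lr theta0).

Definition mofo_v t := (state t).2.

Definition mofo_update t : 'rV[R]_d :=
  let m := mom t.+1 in
  let mh := (1 - b1 ^+ t.+1)^-1 *: m in
  let vh := (1 - b2 ^+ t.+1)^-1 *: mofo_v t.+1 in
  \row_i (if vh 0 i == 0 then 0
          else (if FLT blk alpha m i then mh 0 i else 0) / Num.sqrt (vh 0 i)).

Lemma mofo_mS t : mom t.+1 = b1 *: mom t + (1 - b1) *: G (theta t).
Proof. by rewrite /mofo_m /mofo_theta /=; case: (state t) => [[]]. Qed.

Lemma mofo_vS t :
  mofo_v t.+1 = b2 *: mofo_v t + (1 - b2) *: \row_i (G (theta t) 0 i ^+ 2).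
Proof. by rewrite /mofo_v /mofo_theta /=; case: (state t) => [[]]. Qed.

Lemma mofo_thetaS t : theta t.+1 = theta t - lr t.+1 *: mofo_update t.
Proof.
by rewrite /mofo_update /mofo_v /mofo_m /mofo_theta /=; case: (state t) => [[]].
Qed.

Definition mofo_gap t := mom t - (1 - b1 ^+ t) *: G (theta t.-1).

Lemma mofo_gapS t : mofo_gap t.+1 =
  b1 *: (mofo_gap t + (1 - b1 ^+ t) *: (G (theta t.-1) - G (theta t))).
Proof. by apply/rowP => i; rewrite /mofo_gap mofo_mS !mxE exprS; ring. Qed.

Hypotheses (b1_gt0 : 0 < b1) (b1_lt1 : b1 < 1)
  (b2_gt0 : 0 < b2) (b2_lt1 : b2 < 1) (b1_lt_sqrt_b2 : b1 < Num.sqrt b2).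

Let gamma := b1 / Num.sqrt b2.

Let gamma_gt0 : 0 < gamma.
Proof. by rewrite divr_gt0 ?sqrtr_gt0. Qed.

Let gamma_lt1 : gamma < 1.
Proof. by rewrite ltr_pdivrMr ?sqrtr_gt0 ?mul1r. Qed.

Let gamma2_lt1 : gamma ^+ 2 < 1.
Proof. by rewrite expr_lt1 // ltW. Qed.

Let K := (1 - b1) ^+ 2 / ((1 - b2) * (1 - gamma ^+ 2)).

Lemma mofo_v_ge0 t i : 0 <= mofo_v t 0 i.
Proof.
elim: t => [|t IH]; first by rewrite mxE.
rewrite mofo_vS !mxE addr_ge0 // mulr_ge0 ?sqr_ge0 //.
  exact: ltW.
by rewrite subr_ge0 ltW.
Qed.

(* Split [m_(t+1) = b1 m_t + (1 - b1) g] with weight [gamma ^+ 2]: the first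
   part becomes [b2 m_t ^+ 2], the second [K (1 - b2) g ^+ 2]. *)
Lemma mofo_m_sqr_le t i : mom t 0 i ^+ 2 <= K * mofo_v t 0 i.
Proof.
have s0 : 0 < Num.sqrt b2 by rewrite sqrtr_gt0.
have gamma2 : 0 < gamma ^+ 2 < 1 by rewrite exprn_gt0.
elim: t => [|t IH]; first by rewrite !mxE mulr0 expr0n.
rewrite mofo_mS mofo_vS !mxE.
apply: le_trans (sqrD_le_split _ _ gamma2) _.
have -> : (b1 * mom t 0 i) ^+ 2 / gamma ^+ 2 =
    Num.sqrt b2 ^+ 2 * mom t 0 i ^+ 2.
  by rewrite /gamma; field; rewrite !lt0r_neq0.
rewrite sqr_sqrtr; last exact: ltW.
have -> : ((1 - b1) * G (theta t) 0 i) ^+ 2 / (1 - gamma ^+ 2) =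
    K * ((1 - b2) * G (theta t) 0 i ^+ 2).
  by rewrite /K; field; rewrite !lt0r_neq0 ?subr_gt0.
rewrite mulrDr; apply: lerD => //.
by rewrite [leRHS]mulrCA ler_wpM2l // ltW.
Qed.

Lemma mofo_update_sqr_le t i : mofo_update t 0 i ^+ 2 <=
  (FLT blk alpha (mom t.+1) i)%:R / ((1 - b2) * (1 - gamma) ^+ 2).
Proof.
have den0 : 0 < (1 - b2) * (1 - gamma) ^+ 2.
  by rewrite mulr_gt0 ?exprn_gt0 ?subr_gt0.
rewrite /mofo_update mxE !mxE.
case: eqP => [_|vh0]; first by rewrite expr0n /= divr_ge0 // ltW.
case: FLT; last by rewrite mul0r expr0n /= mul0r.
have v0 : 0 < mofo_v t.+1 0 i.
  rewrite lt_def mofo_v_ge0 andbT.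
  by apply: contra_notN vh0 => /eqP ->; rewrite mulr0.
have vh_gt0 : 0 < (1 - b2 ^+ t.+1)^-1 * mofo_v t.+1 0 i.
  by rewrite mulr_gt0 // invr_gt0 subr_gt0 exprn_ilt1 ?ltW.
rewrite expr_div_n sqr_sqrtr; last exact: ltW.
apply: le_trans (debiased_ratio_le t _ _ v0 (mofo_m_sqr_le t.+1 i)) _.
- by rewrite b1_gt0.
- by rewrite b2_gt0.
have b1' : 0 < 1 - b1 by rewrite subr_gt0.
have b2' : 0 < 1 - b2 by rewrite subr_gt0.
have gamma2' : 0 < 1 - gamma ^+ 2 by rewrite subr_gt0.
have -> : K / (1 - b1) ^+ 2 = ((1 - b2) * (1 - gamma ^+ 2))^-1.
  by rewrite /K; field; rewrite !lt0r_neq0.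
have gamma' : 0 < 1 - gamma by rewrite subr_gt0.
rewrite /= div1r lef_pV2 ?posrE ?mulr_gt0 // ler_pM2l //.
by have := gamma_lt1; have := gamma_gt0; nra.
Qed.

Let C := Num.sqrt (d%:R * alpha + B%:R) / (Num.sqrt (1 - b2) * (1 - gamma)).

Lemma mofo_update_bound_ge0 : 0 <= C.
Proof.
by rewrite divr_ge0 ?sqrtr_ge0 // mulr_ge0 ?sqrtr_ge0 // subr_ge0 ltW.
Qed.

Lemma norm2_mofo_update_le t : 0 <= alpha -> norm2 (mofo_update t) <= C.
Proof.
move=> alpha0.
have den0 : 0 < (1 - b2) * (1 - gamma) ^+ 2.
  by rewrite mulr_gt0 ?exprn_gt0 ?subr_gt0.
have -> : C = Num.sqrt ((d%:R * alpha + B%:R) / ((1 - b2) * (1 - gamma) ^+ 2)).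
  rewrite /C sqrtrM ?addr_ge0 ?mulr_ge0 // sqrtrV ?ltW //.
  rewrite sqrtrM ?subr_ge0 ?ltW //.
  by rewrite sqrtr_sqr ger0_norm // subr_ge0 ltW.
apply/ler_wsqrtr/(le_trans (ler_sum _ (fun i _ => mofo_update_sqr_le t i))).
rewrite -mulr_suml; apply: ler_wpM2r; first by rewrite invr_ge0 ltW.
exact: sum_FLT.
Qed.

Lemma norm2_mofo_step_le t : 0 <= alpha -> 0 <= lr t.+1 ->
  norm2 (theta t.+1 - theta t) <= lr t.+1 * C.
Proof.
move=> alpha0 lr0; rewrite mofo_thetaS addrAC subrr add0r -scaleNr norm2Z normrN.
by rewrite ger0_norm // ler_wpM2l // norm2_mofo_update_le.
Qed.

Variable Lip : R.
Hypotheses (Lip_ge0 : 0 <= Lip)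
  (G_lipschitz : forall x y, norm2 (G x - G y) <= Lip * norm2 (x - y))
  (alpha_ge0 : 0 <= alpha) (lr_ge0 : forall t, 0 <= lr t).

Lemma norm2_mofo_grad_change_le t :
  (1 - b1 ^+ t) * norm2 (G (theta t.-1) - G (theta t))
    <= (1 - b1 ^+ t) * (Lip * C * lr t).
Proof.
case: t => [|t]; first by rewrite expr0 subrr !mul0r.
apply: ler_wpM2l; first by rewrite subr_ge0 exprn_ile1 // ltW.
apply: le_trans (G_lipschitz _ _) _.
by rewrite norm2_distC -mulrA ler_wpM2l // mulrC norm2_mofo_step_le.
Qed.

Lemma norm2_mofo_gap_le t :
  norm2 (mofo_gap t) <= Lip * C * (1 - b1 ^+ t) * disc_sum b1 lr t.
Proof.
elim: t => [|t IH].
  by rewrite /mofo_gap expr0 subrr scale0r subr0 mulr0 mul0r norm2_0.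
rewrite mofo_gapS norm2Z (ger0_norm (ltW b1_gt0)) disc_sumS.
have b1t : 1 - b1 ^+ t <= 1 - b1 ^+ t.+1.
  by rewrite lerD2l lerN2 exprS ler_piMl ?exprn_ge0 ?ltW.
apply: le_trans (ler_wpM2l (ltW b1_gt0) (norm2D _ _)) _.
rewrite norm2Z ger0_norm; last by rewrite subr_ge0 exprn_ile1 // ltW.
have S0 : 0 <= b1 * (disc_sum b1 lr t + lr t).
  by rewrite mulr_ge0 ?addr_ge0 ?disc_sum_ge0 // ltW.
have LC0 : 0 <= Lip * C by rewrite mulr_ge0 // mofo_update_bound_ge0.
apply: le_trans (ler_wpM2r S0 (ler_wpM2l LC0 b1t)).
have -> : Lip * C * (1 - b1 ^+ t) * (b1 * (disc_sum b1 lr t + lr t)) =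
    b1 * (Lip * C * (1 - b1 ^+ t) * disc_sum b1 lr t
          + (1 - b1 ^+ t) * (Lip * C * lr t)).
  by ring.
by rewrite ler_wpM2l ?(ltW b1_gt0) // lerD // norm2_mofo_grad_change_le.
Qed.

Lemma norm1_debiased_mofo_m_err_le t : (0 < t)%N ->
  norm1 ((1 - b1 ^+ t)^-1 *: mom t - G (theta t.-1))
    <= Num.sqrt d%:R * Lip * C * disc_sum b1 lr t.
Proof.
move=> t_gt0.
have bt_gt0 : 0 < 1 - b1 ^+ t by rewrite subr_gt0 exprn_ilt1 ?ltW -?lt0n.
have -> : (1 - b1 ^+ t)^-1 *: mom t - G (theta t.-1) =
    (1 - b1 ^+ t)^-1 *: mofo_gap t.
  by apply/rowP => i; rewrite !mxE; field; rewrite lt0r_neq0.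
rewrite norm1Z ger0_norm; last by rewrite invr_ge0 ltW.
apply: le_trans (ler_wpM2l _ (norm1_le_norm2 _)) _; first by rewrite invr_ge0 ltW.
apply: le_trans (ler_wpM2l _ (ler_wpM2l (sqrtr_ge0 _) (norm2_mofo_gap_le t))) _.
  by rewrite invr_ge0 ltW.
rewrite [leLHS](_ : _ = Num.sqrt d%:R * Lip * C * disc_sum b1 lr t) //.
by field; rewrite lt0r_neq0.
Qed.
End Dynamics.


Theorem lemma5 (R : realType) (d B : nat) (blk : 'I_d -> 'I_B)
  (Lfun : 'rV[R]_d -> R) (G : 'rV[R]_d -> 'rV[R]_d) (Lip : R)
  (alpha b1 b2 eta : R) (theta0 : 'rV[R]_d)
  (Hblk : forall k : 'I_B, exists i : 'I_d, blk i = k)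
  (Hdiff : forall x : 'rV[R]_d, differentiable Lfun x)
  (Hgrad : forall x v : 'rV[R]_d, 'D_v Lfun x = \sum_(i < d) v 0 i * G x 0 i)
  (HLip : forall x y : 'rV[R]_d, norm2 (G x - G y) <= Lip * norm2 (x - y))
  (Halpha : 0 < alpha <= 1)
  (Hb1 : 0 < b1 < 1) (Hb2 : 0 < b2 < 1) (Hb12 : b1 < Num.sqrt b2)
  (Heta : 0 < eta) :
  let lr := fun t : nat => eta / Num.sqrt t%:R in
  let C := Num.sqrt (d%:R * alpha + B%:R) /
           (Num.sqrt (1 - b2) * (1 - b1 / Num.sqrt b2)) in
  forall t : nat, (1 <= t)%N ->
    norm1 ((1 - b1 ^+ t)^-1 *: mofo_m G blk alpha b1 b2 lr theta0 t
           - G (mofo_theta G blk alpha b1 b2 lr theta0 t.-1))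
    <= 2 * Num.sqrt 2 * b1 * Num.sqrt d%:R * Lip * C * eta
       / ((1 - b1) ^+ 2 * Num.sqrt t%:R).
Proof.
move=> lr C t t_gt0.
case/andP: Hb1 => b1_gt0 b1_lt1; case/andP: Hb2 => b2_gt0 b2_lt1.
have alpha_ge0 : 0 <= alpha by case/andP: Halpha => /ltW.
have [d0|d_gt0] := posnP d.
  have -> : Num.sqrt d%:R = 0 :> R by rewrite d0 sqrtr0.
  rewrite mulr0 !mul0r /norm1 big1 // => i.
  by have := leq_trans (ltn_ord i) (eq_leq d0).
have Lip_ge0 := lipschitz_ge0 d_gt0 HLip.
have lr_ge0 s : 0 <= lr s by rewrite divr_ge0 ?sqrtr_ge0 // ltW.
apply: le_trans (norm1_debiased_mofo_m_err_le blk theta0 b1_gt0 b1_lt1 b2_gt0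
  b2_lt1 Hb12 Lip_ge0 HLip alpha_ge0 lr_ge0 t_gt0) _.
rewrite -/C -[disc_sum b1 lr t]/(disc_sum b1 (fun j => eta * (Num.sqrt j%:R)^-1) t).
rewrite disc_sumZ mulrA [leRHS](_ : _ = Num.sqrt d%:R * Lip * C * eta *
    (2 * Num.sqrt 2 * b1 / ((1 - b1) ^+ 2 * Num.sqrt t%:R))); last by ring.
apply: ler_wpM2l; last exact: disc_sum_invsqrt_le.
have C_ge0 : 0 <= C := mofo_update_bound_ge0 d B alpha b2_gt0 Hb12.
by rewrite mulr_ge0 ?(mulr_ge0 (mulr_ge0 (sqrtr_ge0 _) Lip_ge0) C_ge0) // ltW.
Qed.
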